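(* Let $m,n\in\mathbb{N}$, $T=\{1,\dots,m\}$, $\bar A\in\mathbb{R}^{m\times n}$, $\bar b\in\mathbb{R}^m$ with $P:=\{x\in\mathbb{R}^n\mid\bar Ax\le\bar b\}\neq\emptyset$, and let $F$ be a face of $P$. Then there exists $\gamma_F\ge0$ such that $\operatorname{clm}\mathcal{F}_{\bar A}(\bar b,x)=\gamma_F$ for all $x\in\operatorname{ri}F$, and moreover $\operatorname{clm}\mathcal{F}_{\bar A}(\bar b,x)\ge\gamma_F$ for all $x\in F\setminus\operatorname{ri}F$.
   Context: $\mathcal{F}_{\bar A}:\mathbb{R}^m\rightrightarrows\mathbb{R}^n$ is defined by $\mathcal{F}_{\bar A}(b)=\{x\in\mathbb{R}^n\mid\bar Ax\le b\}$ (right-hand side perturbations). $\mathbb{R}^n$ carries an arbitrary norm $\|\cdot\|$, $\mathbb{R}^m$ carries $\|b\|_\infty=\max_t|b_t|$, and $\operatorname{dist}(x,\Omega)=\inf_{\omega\in\Omega}\|x-\omega\|$. For $x\in\mathcal{F}_{\bar A}(\bar b)$, the calmness modulus $\operatorname{clm}\mathcal{F}_{\bar A}(\bar b,x)$ is the infimum of all $\kappa\ge0$ for which there are neighborhoods $V$ of $\bar b$ and $U$ of $x$ with $\operatorname{dist}(z,\mathcal{F}_{\bar A}(\bar b))\le\kappa\|b-\bar b\|_\infty$ for all $b\in V$ and all $z\in\mathcal{F}_{\bar A}(b)\cap U$. $\operatorname{ri}$ denotes relative interior. *)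

From HB Require Import structures.
From mathcomp Require Import all_boot all_order all_algebra.
From mathcomp Require Import classical_sets boolp reals constructive_ereal ereal.
Set Implicit Arguments. Unset Strict Implicit. Unset Printing Implicit Defensive.
Import Order.TTheory GRing.Theory Num.Theory.
Local Open Scope classical_set_scope.
Local Open Scope ring_scope.

Section Defs.
Variable R : realType.

Definition is_norm (n : nat) (N : 'cV[R]_n -> R) : Prop :=
  [/\ forall x, N x = 0 -> x = 0,
      forall (a : R) x, N (a *: x) = `|a| * N x
    & forall x y, N (x + y) <= N x + N y].

Definition supnorm (m : nat) (b : 'cV[R]_m) : R :=
  \big[Num.max/0]_(i < m) `|b i 0|.

Definition feas (m n : nat) (A : 'M[R]_(m, n)) (b : 'cV[R]_m) : set 'cV[R]_n :=
  [set x | forall i : 'I_m, (A *m x) i 0 <= b i 0].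

Definition distN (n : nat) (N : 'cV[R]_n -> R) (x : 'cV[R]_n) (O : set 'cV[R]_n) : R :=
  inf [set N (x - w) | w in O].

Definition calm_const (m n : nat) (N : 'cV[R]_n -> R) (A : 'M[R]_(m, n))
    (b : 'cV[R]_m) (x : 'cV[R]_n) (k : R) : Prop :=
  0 <= k /\ exists d e : R, [/\ 0 < d, 0 < e &
    forall (b' : 'cV[R]_m) (z : 'cV[R]_n),
      supnorm (b' - b) < d -> N (z - x) < e -> feas A b' z ->
      distN N z (feas A b) <= k * supnorm (b' - b)].

(* Calmness modulus (extended real: infimum of the empty set is +oo). *)
Definition clm (m n : nat) (N : 'cV[R]_n -> R) (A : 'M[R]_(m, n))
    (b : 'cV[R]_m) (x : 'cV[R]_n) : \bar R :=
  ereal_inf [set k%:E | k in calm_const N A b x].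

Definition convex_set (n : nat) (C : set 'cV[R]_n) : Prop :=
  forall x y (t : R), C x -> C y -> 0 <= t <= 1 -> C ((1 - t) *: x + t *: y).

(* Face in the sense of convex analysis (Rockafellar): a convex subset F of P
   such that whenever a relative-interior point of a closed segment in P lies
   in F, both endpoints lie in F. *)
Definition is_face (n : nat) (P F : set 'cV[R]_n) : Prop :=
  [/\ F `<=` P, convex_set F &
      forall x y (t : R), P x -> P y -> 0 < t < 1 ->
        F ((1 - t) *: x + t *: y) -> F x /\ F y].

Definition aff (n : nat) (F : set 'cV[R]_n) : set 'cV[R]_n :=
  [set y | exists (k : nat) (p : 'I_k -> 'cV[R]_n) (l : 'I_k -> R),
     [/\ forall i, F (p i), \sum_(i < k) l i = 1 & y = \sum_(i < k) l i *: p i]].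

Definition ri (n : nat) (N : 'cV[R]_n -> R) (F : set 'cV[R]_n) : set 'cV[R]_n :=
  [set x | F x /\ exists e : R, 0 < e /\
     forall y, aff F y -> N (y - x) < e -> F y].

End Defs.

From HB Require Import structures.
From mathcomp Require Import all_boot all_order all_algebra.
From mathcomp Require Import classical_sets boolp reals constructive_ereal ereal.
From mathcomp Require Import topology normedtype derive.
From mathcomp Require Import ring lra.
Set Implicit Arguments. Unset Strict Implicit. Unset Printing Implicit Defensive.
Import numFieldNormedType.Exports.
Import Order.TTheory GRing.Theory Num.Theory.
Local Open Scope classical_set_scope.
Local Open Scope ring_scope.

(* Calmness of F_A at (b, x) depends on x only through the set of constraints
   active at x, and monotonically so: if x and y are feasible and every
   constraint active at x is active at y, then every calmness constant at y is
   one at x.  A perturbed solution z near x is pulled along the segment [y, z]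
   into the calmness neighbourhood of y; a point of P close to it, pushed back
   along the same ray from y, still satisfies the constraints active at y, and
   the remaining ones are inactive at x, hence hold with a uniform slack near x.
   All points of ri F have the same active set, contained in the active set of
   every point of F.  Finally, calmness constants exist at all by Hoffman's
   error bound for the cone {c | A_i c <= 0, i active}, proved by
   Fourier-Motzkin elimination. *)

Section Hoffman.
Variable R : realFieldType.

Definition dot n (a u : 'I_n -> R) : R := \sum_(j < n) a j * u j.

Definition vtail n (u : 'I_n.+1 -> R) : 'I_n -> R := fun j => u (lift ord0 j).

Definition vcons n (t : R) (u : 'I_n -> R) : 'I_n.+1 -> R :=
  fun j => if unlift ord0 j is Some k then u k else t.

Lemma dot_recl n (a u : 'I_n.+1 -> R) :
  dot a u = a ord0 * u ord0 + dot (vtail a) (vtail u).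
Proof. exact: big_ord_recl. Qed.

Lemma dot0l n (u : 'I_n -> R) : dot (fun=> 0) u = 0.
Proof. by apply: big1 => j _; rewrite mul0r. Qed.

Lemma dot_vcons n (a : 'I_n.+1 -> R) t u :
  dot a (vcons t u) = a ord0 * t + dot (vtail a) u.
Proof.
rewrite dot_recl /vcons unlift_none; congr (_ + _).
by apply: eq_bigr => j _; rewrite /vtail liftK.
Qed.

Lemma dotBr n (a u v : 'I_n -> R) :
  dot a (fun j => u j - v j) = dot a u - dot a v.
Proof. by rewrite /dot -sumrB; apply: eq_bigr => j _; rewrite mulrBr. Qed.

Lemma ler_norm_dot n (a v : 'I_n -> R) (B : R) :
  (forall j, `|v j| <= B) -> `|dot a v| <= (\sum_j `|a j|) * B.
Proof.
move=> vB; rewrite mulr_suml; apply: le_trans (ler_norm_sum _ _ _) _.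
by apply: ler_sum => j _; rewrite normrM ler_wpM2l.
Qed.

Definition fm_pair n (p q : 'I_n.+1 -> R) : 'I_n -> R :=
  fun j => (p ord0 * vtail q j - q ord0 * vtail p j) / (p ord0 - q ord0).

Lemma dot_fm_pair n (p q : 'I_n.+1 -> R) u :
  dot (fm_pair p q) u
  = (p ord0 * dot (vtail q) u - q ord0 * dot (vtail p) u) / (p ord0 - q ord0).
Proof.
rewrite /dot !mulr_sumr -sumrB mulr_suml; apply: eq_bigr => j _.
by rewrite /fm_pair; ring.
Qed.

(* Fourier-Motzkin elimination of the first variable: the rows without first
   coefficient, and the combination [fm_pair] of each row with a positive
   first coefficient and each row with a negative one.  Indices that do not
   qualify carry the zero row, which imposes nothing. *)
Definition fm_elim n (I : finType) (a : I -> 'I_n.+1 -> R) (k : I + I * I) :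
    'I_n -> R :=
  match k with
  | inl i => if a i ord0 == 0 then vtail (a i) else fun=> 0
  | inr (p, q) =>
      if (0 < a p ord0) && (a q ord0 < 0) then fm_pair (a p) (a q) else fun=> 0
  end.

(* The value of the first variable at which the row [a] becomes tight when the
   other variables are [c]. *)
Definition fm_cut n (a : 'I_n.+1 -> R) (c : 'I_n -> R) : R :=
  - dot (vtail a) c / a ord0.

Section Elimination.
Variables (n : nat) (I : finType) (a : I -> 'I_n.+1 -> R).

Lemma fm_elim_le d r : 0 <= r -> (forall i, dot (a i) d <= r) ->
  forall k, dot (fm_elim a k) (vtail d) <= r.
Proof.
move=> r0 ad [i|[p q]] /=.
  case: eqP => [ai0|_]; last by rewrite dot0l.
  by have := ad i; rewrite dot_recl ai0 mul0r add0r.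
case: andP => [[p0 q0]|_]; last by rewrite dot0l.
have := ad p; have := ad q; rewrite !dot_recl dot_fm_pair.
set X := dot (vtail (a p)) _; set Y := dot (vtail (a q)) _ => hq hp.
have pq0 : 0 < a p ord0 - a q ord0 by rewrite subr_gt0 (lt_trans q0).
by rewrite ler_pdivrMr //; nra.
Qed.

Lemma fm_cut_mono c p q : (forall k, dot (fm_elim a k) c <= 0) ->
  0 < a p ord0 -> a q ord0 < 0 -> fm_cut (a q) c <= fm_cut (a p) c.
Proof.
move=> ac p0 q0; have := ac (inr (p, q)); rewrite /= p0 q0 /= dot_fm_pair.
have pq0 : 0 < a p ord0 - a q ord0 by rewrite subr_gt0 (lt_trans q0).
rewrite pmulr_lle0 ?invr_gt0 // /fm_cut.
set X := dot (vtail (a p)) c; set Y := dot (vtail (a q)) c => h.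
by rewrite ler_ndivrMr // mulrAC ler_pdivrMr //; nra.
Qed.

Lemma fm_vcons_le c t : (forall k, dot (fm_elim a k) c <= 0) ->
    (forall q, a q ord0 < 0 -> fm_cut (a q) c <= t) ->
    (forall p, 0 < a p ord0 -> t <= fm_cut (a p) c) ->
  forall i, dot (a i) (vcons t c) <= 0.
Proof.
move=> ac qt tp i; rewrite dot_vcons; rewrite /fm_cut in qt tp.
have [ai0|ai0|ai0] := ltgtP (a i ord0) 0.
- by have := qt i ai0; rewrite ler_ndivrMr //; lra.
- by have := tp i ai0; rewrite ler_pdivlMr //; lra.
- by have := ac (inl i); rewrite /= ai0 eqxx mul0r add0r.
Qed.

End Elimination.

Lemma fm_cut_near n (a : 'I_n.+1 -> R) d c r D : dot a d <= r ->
    `|dot (vtail a) (vtail d) - dot (vtail a) c| <= D ->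
  (0 < a ord0 -> d ord0 - (r + D) / `|a ord0| <= fm_cut a c) /\
  (a ord0 < 0 -> fm_cut a c <= d ord0 + (r + D) / `|a ord0|).
Proof.
rewrite dot_recl /fm_cut ler_norml => ad /andP[XD _]; split=> a0.
  have -> : d ord0 - (r + D) / `|a ord0| = (a ord0 * d ord0 - (r + D)) / a ord0.
    by rewrite gtr0_norm //; field; rewrite gt_eqF.
  by rewrite ler_pM2r ?invr_gt0 //; lra.
have -> : d ord0 + (r + D) / `|a ord0| = (a ord0 * d ord0 - (r + D)) / a ord0.
  by rewrite ltr0_norm // invrN; field; rewrite lt_eqF.
by rewrite ler_nM2r ?invr_lt0 //; lra.
Qed.

Theorem hoffman_cone n (I : finType) (a : I -> 'I_n -> R) :
  exists2 K, 0 <= K & forall d r, 0 <= r -> (forall i, dot (a i) d <= r) ->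
    exists2 c, (forall i, dot (a i) c <= 0) & forall j, `|d j - c j| <= K * r.
Proof.
elim: n I a => [|n IHn] I a.
  exists 0 => // d r _ _; exists d => [i|j]; first by rewrite /dot big_ord0.
  by rewrite subrr normr0 mul0r.
have [K' K'0 HK'] := IHn _ (fm_elim a).
pose w i := (1 + (\sum_j `|vtail (a i) j|) * K') / `|a i ord0|.
have w_ge0 i : 0 <= w i by rewrite divr_ge0 ?addr_ge0 ?mulr_ge0 ?sumr_ge0.
pose B := \sum_i w i.
have wB i : w i <= B by rewrite /B (bigD1 i) //= lerDl sumr_ge0.
exists (B + K') => [|d r r0 ad]; first by rewrite addr_ge0 ?sumr_ge0.
have [c ac dc] := HK' (vtail d) r r0 (fm_elim_le r0 ad).
have near i :
    d ord0 - B * r <= d ord0 - w i * r /\ d ord0 + w i * r <= d ord0 + B * r.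
  by have := ler_wpM2r r0 (wB i); split; lra.
have dot_near i : `|dot (vtail (a i)) (vtail d) - dot (vtail (a i)) c|
    <= (\sum_j `|vtail (a i) j|) * (K' * r).
  by rewrite -dotBr; apply: ler_norm_dot.
have cut_near i := fm_cut_near (ad i) (dot_near i).
have wE i : (r + (\sum_j `|vtail (a i) j|) * (K' * r)) / `|a i ord0| = w i * r.
  by rewrite /w mulrAC; congr (_ / _); ring.
(* Any [t] between the cuts of the negative rows and those of the positive
   rows solves the system; the floor [d ord0 - B * r] keeps [t] near [d ord0]. *)
pose t := \big[Num.max/(d ord0 - B * r)]_(q | a q ord0 < 0) fm_cut (a q) c.
have t_cut p : 0 < a p ord0 -> t <= fm_cut (a p) c.
  move=> p0; apply: bigmax_le => [|q q0]; last exact: fm_cut_mono.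
  by apply: le_trans (proj1 (near p)) _; rewrite -wE; apply: (cut_near p).1.
exists (vcons t c) => [|j].
  by apply: fm_vcons_le => // q q0; apply: le_bigmax_cond.
case: (unliftP ord0 j) => [k ->|->]; rewrite /vcons ?liftK ?unlift_none.
  by apply: le_trans (dc k) _; rewrite ler_wpM2r // lerDr sumr_ge0.
apply: (@le_trans _ _ (B * r)); last by rewrite ler_wpM2r // lerDl.
rewrite ler_distlC bigmax_ge_id /=; apply: bigmax_le => [|q q0].
  have Br0 : 0 <= B * r by rewrite mulr_ge0 ?sumr_ge0.
  by rewrite lerD2l (le_trans _ Br0) // oppr_le0.
by apply: le_trans (proj2 (near q)); rewrite -wE; apply: (cut_near q).2.
Qed.

End Hoffman.

Lemma ler_mul_divD1 (R : realFieldType) (k r : R) :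
  0 <= k -> 0 <= r -> k * (r / (k + 1)) <= r.
Proof. by move=> k0 r0; rewrite mulrCA ler_piMr // ler_pdivrMr ?mul1r; lra. Qed.

Lemma small_scale (R : realFieldType) (a c d e : R) :
  0 <= a -> 0 <= c -> 0 < d -> 0 < e ->
  exists l, [/\ 0 < l, l <= 1, l * a < d & l * c < e].
Proof.
move=> a0 c0 d0 e0; pose l := Num.min 1 (Num.min (d / (a + 1)) (e / (c + 1))).
have la : l <= d / (a + 1) by rewrite !ge_min lexx orbT.
have lc : l <= e / (c + 1) by rewrite !ge_min lexx !orbT.
have l0 : 0 < l by rewrite !lt_min ltr01 !divr_gt0 //; lra.
exists l; split => //; first by rewrite ge_min lexx.
  by apply: le_lt_trans (ler_wpM2r a0 la) _; rewrite mulrAC ltr_pdivrMr; nra.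
by apply: le_lt_trans (ler_wpM2r c0 lc) _; rewrite mulrAC ltr_pdivrMr; nra.
Qed.

Lemma lipschitz_continuous (R : realType) (V : pseudoMetricNormedZmodType R)
    (f : V -> R) (C : R) :
  0 <= C -> (forall x y, `|f x - f y| <= C * `|x - y|) -> continuous f.
Proof.
move=> C0 fC x; apply/cvgrPdist_lt => e e0; apply/nbhs_normP.
exists (e / (C + 1)) => [|y /= xy]; first by rewrite /= divr_gt0 //; lra.
apply: le_lt_trans (fC x y) _; apply: le_lt_trans (ler_wpM2l C0 (ltW xy)) _.
by rewrite mulrA ltr_pdivrMr; lra.
Qed.

Lemma ler_mx_norm_coord (R : realType) m n (v : 'M[R]_(m, n)) i j :
  `|v i j| <= `|v|.
Proof.
rewrite [leRHS]/Num.norm /= mx_normrE; apply/bigmax_geP; right => /=.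
by exists (i, j).
Qed.

Lemma compact_unit_sphere (R : realType) n :
  compact [set v : 'rV[R]_n | `|v| = 1].
Proof.
apply: bounded_closed_compact.
  by exists 1; split=> // M M1 x /= ->; apply: ltW.
have -> : [set v : 'rV[R]_n | `|v| = 1] = (fun v => `|v|) @^-1` [set 1] by [].
by apply: preimage_closed; [move=> x _; apply: norm_continuous|apply: closed_eq].
Qed.

Section Norm.
Variables (R : realType) (n : nat) (N : 'cV[R]_n -> R).
Hypothesis normN : is_norm N.

Lemma isnorm_eq0 x : N x = 0 -> x = 0.
Proof. by case: normN => + _ _; apply. Qed.

Lemma isnormZ a x : N (a *: x) = `|a| * N x.
Proof. by case: normN => _ + _; apply. Qed.

Lemma isnormD x y : N (x + y) <= N x + N y.
Proof. by case: normN => _ _; apply. Qed.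

Lemma isnorm0 : N 0 = 0.
Proof. by rewrite -(scale0r 0) isnormZ normr0 mul0r. Qed.

Lemma isnormN x : N (- x) = N x.
Proof. by rewrite -scaleN1r isnormZ normrN1 mul1r. Qed.

Lemma isnorm_ge0 x : 0 <= N x.
Proof. by have := isnormD x (- x); rewrite subrr isnorm0 isnormN; lra. Qed.

Lemma isnormB_trans x y z : N (x - y) <= N (x - z) + N (z - y).
Proof. by have := isnormD (x - z) (z - y); rewrite addrA subrK. Qed.

Lemma ler_dist_isnorm x y : `|N x - N y| <= N (x - y).
Proof.
have := isnormB_trans x 0 y; have := isnormB_trans y 0 x.
by rewrite !subr0 -opprB isnormN ler_norml; lra.
Qed.

Lemma isnorm_sum (I : Type) (r : seq I) (f : I -> 'cV[R]_n) :
  N (\sum_(i <- r) f i) <= \sum_(i <- r) N (f i).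
Proof.
elim/big_ind2: _ => [|x1 x2 y1 y2 h1 h2|//]; first by rewrite isnorm0.
by apply: le_trans (isnormD _ _) (lerD h1 h2).
Qed.

Lemma isnorm_le_coord : exists2 M, 0 <= M &
  forall (u : 'cV[R]_n) (B : R), (forall j, `|u j 0| <= B) -> N u <= M * B.
Proof.
exists (\sum_(i < n) N (delta_mx i 0)) => [|u B uB].
  by apply: sumr_ge0 => i _; apply: isnorm_ge0.
rewrite {1}(matrix_sum_delta u) mulr_suml; apply: le_trans (isnorm_sum _ _) _.
apply: ler_sum => i _; rewrite big_ord1 isnormZ mulrC.
by rewrite ler_wpM2l ?isnorm_ge0.
Qed.

Lemma isnorm_min_sphere :
  exists2 mu, 0 < mu & forall v : 'rV[R]_n, `|v| = 1 -> mu <= N v^T.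
Proof.
pose S := [set v : 'rV[R]_n | `|v| = 1].
have [S0|S0] := pselect (S !=set0); last first.
  by exists 1 => // v v1; case: S0; exists v.
have [M M0 HM] := isnorm_le_coord.
have cN : continuous (fun v : 'rV[R]_n => N v^T).
  apply: (lipschitz_continuous M0) => x y.
  apply: le_trans (ler_dist_isnorm _ _) _; rewrite -linearB.
  by apply: HM => j; rewrite mxE ler_mx_norm_coord.
have [v0 /set_mem v01 v0_min] :=
  compact_EVT_min S0 (@compact_unit_sphere R n) (continuous_subspaceT cN).
exists (N v0^T) => [|v v1]; last exact/v0_min/mem_set.
rewrite lt_neqAle isnorm_ge0 andbT eq_sym; apply/eqP => /isnorm_eq0/eqP.
rewrite trmx_eq0 => /eqP v00; move: v01; rewrite /S /= v00 normr0 => /esym/eqP.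
by rewrite oner_eq0.
Qed.

Lemma coord_le_isnorm :
  exists2 c, 0 < c & forall (u : 'cV[R]_n) j, `|u j 0| <= c * N u.
Proof.
have [mu mu0 mu_min] := isnorm_min_sphere.
exists mu^-1 => [|u j]; first by rewrite invr_gt0.
have [->|u0] := eqVneq u 0; first by rewrite mxE normr0 isnorm0 mulr0.
have uT0 : 0 < `|u^T| by rewrite normr_gt0 trmx_eq0.
have := mu_min (`|u^T|^-1 *: u^T).
rewrite normrZ ger0_norm ?invr_ge0 // mulVf ?gt_eqF // => /(_ erefl).
rewrite linearZ /= trmxK isnormZ ger0_norm ?invr_ge0 // mulrC ler_pdivlMr //.
move=> Nu; rewrite mulrC ler_pdivlMr //; apply: le_trans Nu.
rewrite mulrC; apply: ler_wpM2l; first exact: ltW.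
by have := ler_mx_norm_coord u^T 0 j; rewrite mxE.
Qed.

End Norm.

Section SupNorm.
Variables (R : realType) (m : nat).
Implicit Types v : 'cV[R]_m.

Lemma supnorm_ge0 v : 0 <= supnorm v.
Proof. by apply: (big_ind (>= 0)) => // x y; rewrite le_max => ->. Qed.

Lemma ler_coord_supnorm v i : `|v i 0| <= supnorm v.
Proof. by rewrite /supnorm (bigD1 i) //= le_max lexx. Qed.

Lemma supnorm_le v B : 0 <= B -> (forall i, `|v i 0| <= B) -> supnorm v <= B.
Proof. by move=> B0 vB; apply: bigmax_le. Qed.

End SupNorm.

Lemma aff_line (R : realType) n (F : set 'cV[R]_n) x y t : F x -> F y ->
  aff F ((1 - t) *: x + t *: y).
Proof.
move=> Fx Fy; pose p (i : 'I_2) := if val i == 0%N then x else y.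
exists 2%N, p, (fun i => if val i == 0%N then 1 - t else t).
split=> [i||]; rewrite ?big_ord_recl ?big_ord0 /p /= ?addr0 ?subrK //.
by case: ifP.
Qed.

Section Calmness.
Variables (R : realType) (m n : nat) (N : 'cV[R]_n -> R).
Variables (A : 'M[R]_(m, n)) (b : 'cV[R]_m).
Hypothesis normN : is_norm N.
Implicit Types u v w x y z : 'cV[R]_n.

Definition active x (i : 'I_m) := (A *m x) i 0 == b i 0.

Lemma mulmx_coordD u v i : (A *m (u + v)) i 0 = (A *m u) i 0 + (A *m v) i 0.
Proof. by rewrite mulmxDr !mxE. Qed.

Lemma mulmx_coordB u v i : (A *m (u - v)) i 0 = (A *m u) i 0 - (A *m v) i 0.
Proof. by rewrite mulmxBr !mxE. Qed.

Lemma mulmx_coordZ a u i : (A *m (a *: u)) i 0 = a * (A *m u) i 0.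
Proof. by rewrite -scalemxAr !mxE. Qed.

Lemma mulmx_coord_bound :
  exists2 C, 0 < C & forall u i, `|(A *m u) i 0| <= C * N u.
Proof.
have [c c0 uc] := coord_le_isnorm normN.
pose S := \sum_i \sum_j `|A i j|.
have S0 : 0 <= S by apply: sumr_ge0 => i _; apply: sumr_ge0.
exists (S * c + 1) => [|u i]; first by have := mulr_ge0 S0 (ltW c0); lra.
apply: le_trans (_ : S * (c * N u) <= _); last first.
  by rewrite mulrDl mul1r mulrA lerDl isnorm_ge0.
rewrite mxE; apply: le_trans (ler_norm_sum _ _ _) _.
apply: le_trans (_ : (\sum_j `|A i j|) * (c * N u) <= _).
  by rewrite mulr_suml; apply: ler_sum => j _; rewrite normrM ler_wpM2l.
apply: ler_wpM2r; first by rewrite mulr_ge0 ?isnorm_ge0 ?ltW.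
rewrite /S (bigD1 i) //= lerDl.
by apply: sumr_ge0 => i' _; apply: sumr_ge0.
Qed.

Lemma distN_lbound z (O : set 'cV[R]_n) : has_lbound [set N (z - w) | w in O].
Proof. by exists 0 => _ [w _ <-]; apply: isnorm_ge0. Qed.

Lemma distN_le z w : feas A b w -> distN N z (feas A b) <= N (z - w).
Proof. by move=> fw; apply: ge_inf; [apply: distN_lbound|exists w]. Qed.

Lemma distN_approx z eta : feas A b !=set0 -> 0 < eta ->
  exists2 w, feas A b w & N (z - w) < distN N z (feas A b) + eta.
Proof.
move=> [w0 fw0] eta0.
have ne : [set N (z - w) | w in feas A b] !=set0 by exists (N (z - w0)), w0.
have [_ [w fw <-] ?] := inf_adherent eta0 (conj ne (distN_lbound z _)).
by exists w.
Qed.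

Lemma feas_convex b' y z l : feas A b y -> feas A b' z -> 0 <= l <= 1 ->
  feas A ((1 - l) *: b + l *: b') ((1 - l) *: y + l *: z).
Proof.
move=> fy fz /andP[l0 l1] i; have := fy i; have := fz i.
rewrite mulmx_coordD !mulmx_coordZ !mxE => fzi fyi.
by apply: lerD; apply: ler_wpM2l; rewrite ?subr_ge0.
Qed.

Lemma active_dilate y w s i : feas A b w -> active y i -> 0 <= s ->
  (A *m (y + s *: (w - y))) i 0 <= b i 0.
Proof.
move=> fw /eqP yi s0; rewrite mulmx_coordD mulmx_coordZ mulmx_coordB yi.
by rewrite gerDl mulr_ge0_le0 // subr_le0.
Qed.

Lemma inactive_stable x : feas A b x ->
  exists2 r, 0 < r & forall u i, ~~ active x i -> N u <= r ->
    (A *m (x + u)) i 0 <= b i 0.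
Proof.
move=> fx; have [C C0 AC] := mulmx_coord_bound.
pose g := \big[Num.min/1]_(i | ~~ active x i) (b i 0 - (A *m x) i 0).
have g0 : 0 < g.
  by apply: lt_bigmin => // i xi; rewrite subr_gt0 lt_neqAle (fx i) andbT.
exists (g / C) => [|u i xi Nu]; first by rewrite divr_gt0.
have gi : g <= b i 0 - (A *m x) i 0 by apply: bigmin_le_cond.
have Au : (A *m u) i 0 <= g.
  apply: le_trans (ler_norm _) (le_trans (AC u i) _).
  by rewrite mulrC -ler_pdivlMr.
by rewrite mulmx_coordD; lra.
Qed.

Lemma calm_const_exists x : feas A b x -> exists k, calm_const N A b x k.
Proof.
move=> fx; have [M M0 HM] := isnorm_le_coord normN.
have [r r0 stable] := inactive_stable fx.
pose a i j := if active x i then A i j else 0.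
have [K K0 HK] := hoffman_cone a.
have k0 : 0 <= M * K by rewrite mulr_ge0.
have r2 : 0 < r / 2 by rewrite divr_gt0.
exists (M * K); split => //; exists ((r / 2) / (M * K + 1)), (r / 2).
split=> // [|b' z db' zx fz].
  by rewrite divr_gt0 //; lra.
set de := supnorm (b' - b).
have dot_a i u :
    dot (a i) (fun j => u j 0) = if active x i then (A *m u) i 0 else 0.
  by rewrite /a; case: ifP => _; [rewrite mxE|apply: dot0l].
have ad i : dot (a i) (fun j => (z - x) j 0) <= de.
  rewrite dot_a; case: ifP => [/eqP xi|_]; last exact: supnorm_ge0.
  rewrite mulmx_coordB xi; apply: le_trans (_ : b' i 0 - b i 0 <= _).
    by rewrite lerD2r; apply: fz.
  have := ler_coord_supnorm (b' - b) i; rewrite !mxE.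
  exact: le_trans (ler_norm _).
have [c ac dc] := HK _ _ (supnorm_ge0 _) ad.
pose v : 'cV[R]_n := \col_j c j.
have cE : c = fun j => v j 0 by apply: funext => j; rewrite mxE.
have Av i : active x i -> (A *m v) i 0 <= 0.
  by move=> xi; have := ac i; rewrite cE dot_a xi.
have zxv : N ((z - x) - v) <= M * K * de.
  by rewrite -mulrA; apply: HM => j; have := dc j; rewrite !mxE.
suff fxv : feas A b (x + v).
  by apply: le_trans (distN_le z fxv) _; rewrite opprD addrA.
move=> i; have [xi|nxi] := boolP (active x i).
  by rewrite mulmx_coordD (eqP xi) gerDl Av.
apply: stable => //; rewrite -[v](subKr (z - x)).
apply: le_trans (isnormB_trans normN _ _ 0) _.
rewrite subr0 sub0r (isnormN normN) [leRHS]splitr; apply: lerD; first exact: ltW.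
apply: le_trans zxv (le_trans (ler_wpM2l k0 (ltW db')) _).
exact: ler_mul_divD1 k0 (ltW r2).
Qed.

Lemma calm_const_scaled y k dy ey b' z eta :
    feas A b y -> 0 <= k -> 0 < dy -> 0 < ey ->
    (forall b'' z', supnorm (b'' - b) < dy -> N (z' - y) < ey ->
       feas A b'' z' -> distN N z' (feas A b) <= k * supnorm (b'' - b)) ->
    feas A b' z -> 0 < eta ->
  exists2 w, N (z - w) < k * supnorm (b' - b) + eta &
    forall i, active y i -> (A *m w) i 0 <= b i 0.
Proof.
move=> fy k0 dy0 ey0 calm_y fz eta0; set de := supnorm (b' - b).
have [l [l0 l1 lde lzy]] :=
  small_scale (supnorm_ge0 (b' - b)) (isnorm_ge0 normN (z - y)) dy0 ey0.
pose z' := (1 - l) *: y + l *: z.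
have bl : supnorm ((1 - l) *: b + l *: b' - b) <= l * de.
  apply: supnorm_le => [|i]; first by rewrite mulr_ge0 ?supnorm_ge0 ?ltW.
  have -> : ((1 - l) *: b + l *: b' - b) i 0 = l * (b' - b) i 0.
    by rewrite !mxE; ring.
  rewrite normrM gtr0_norm //.
  by apply: ler_wpM2l; [exact: ltW|exact: ler_coord_supnorm].
have zl : N (z' - y) < ey.
  have -> : z' - y = l *: (z - y) by apply/matrixP => i j; rewrite !mxE; ring.
  by rewrite (isnormZ normN) gtr0_norm.
have l01 : 0 <= l <= 1 by rewrite ltW.
have dz' := calm_y _ _ (le_lt_trans bl lde) zl (feas_convex fy fz l01).
have [w fw zw] := distN_approx z' (ex_intro _ y fy) (mulr_gt0 l0 eta0).
exists (y + l^-1 *: (w - y)) => [|i yi]; last first.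
  by apply: active_dilate; rewrite ?invr_ge0 ?ltW.
have -> : z - (y + l^-1 *: (w - y)) = l^-1 *: (z' - w).
  by apply/matrixP => i j; rewrite !mxE; field; rewrite gt_eqF.
rewrite (isnormZ normN) gtr0_norm ?invr_gt0 // mulrC ltr_pdivrMr //.
apply: lt_le_trans zw _; rewrite mulrDl (mulrC eta) lerD2r.
by apply: le_trans dz' _; rewrite -mulrA (mulrC de); apply: ler_wpM2l.
Qed.

Lemma calm_const_active_sub x y : feas A b x -> feas A b y ->
    (forall i, active x i -> active y i) ->
  calm_const N A b y `<=` calm_const N A b x.
Proof.
move=> fx fy xy k [k0 [dy [ey [dy0 ey0 calm_y]]]]; split=> //.
have [r r0 stable] := inactive_stable fx.
have r3 : 0 < r / 3 by rewrite divr_gt0.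
exists ((r / 3) / (k + 1)), (r / 3); split=> // [|b' z db' zx fz].
  by rewrite divr_gt0 //; lra.
apply/ler_addgt0Pr => eta eta0; pose eta' := Num.min eta (r / 3).
have eta'0 : 0 < eta' by rewrite lt_min eta0.
have [w zw yw] := calm_const_scaled fy k0 dy0 ey0 calm_y fz eta'0.
suff fw : feas A b w.
  apply: le_trans (distN_le z fw) (ltW (lt_le_trans zw _)).
  by rewrite lerD2l ge_min lexx.
move=> i; have [yi|nyi] := boolP (active y i); first exact: yw.
have nxi : ~~ active x i by apply: contra nyi; apply: xy.
rewrite -[w](addrNK x) addrC; apply: stable => //.
apply: le_trans (isnormB_trans normN _ _ z) _; rewrite -opprB (isnormN normN).
have : k * supnorm (b' - b) <= r / 3.
  exact: le_trans (ler_wpM2l k0 (ltW db')) (ler_mul_divD1 k0 (ltW r3)).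
have : eta' <= r / 3 by rewrite ge_min lexx orbT.
lra.
Qed.

Lemma ri_active (F : set 'cV[R]_n) x y i : F `<=` feas A b -> ri N F x ->
  F y -> active x i -> active y i.
Proof.
move=> FP [Fx [e [e0 ri_x]]] Fy /eqP xi.
pose s := e / (2 * (N (y - x) + 1)).
have Nyx := isnorm_ge0 normN (y - x).
have s0 : 0 < s by rewrite divr_gt0 // mulr_gt0 //; lra.
have Fx' : F ((1 - - s) *: x + - s *: y).
  apply: ri_x; first exact: aff_line.
  have -> : (1 - - s) *: x + - s *: y - x = - s *: (y - x).
    by apply/matrixP => i' j; rewrite !mxE; ring.
  rewrite (isnormZ normN) normrN gtr0_norm //.
  have -> : s * N (y - x) = e / 2 * (N (y - x) / (N (y - x) + 1)).
    by rewrite /s; field; lra.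
  apply: (@le_lt_trans _ _ (e / 2)); last lra.
  by rewrite ler_piMr ?divr_ge0 ?ler_pdivrMr; lra.
have := FP _ Fx' i; have := FP _ Fy i.
rewrite mulmx_coordD !mulmx_coordZ xi => yi x'i.
have : s * b i 0 <= s * (A *m y) i 0 by lra.
by rewrite ler_pM2l // => byi; rewrite /active eq_le yi.
Qed.

Lemma calm_const_ri (F : set 'cV[R]_n) x y : F `<=` feas A b -> ri N F x ->
  F y -> calm_const N A b y `<=` calm_const N A b x.
Proof.
move=> FP rx Fy; apply: calm_const_active_sub (FP _ rx.1) (FP _ Fy) _.
by move=> i; apply: (ri_active FP rx Fy).
Qed.

Lemma calm_const_lbound x : has_lbound (calm_const N A b x).
Proof. by exists 0 => k []. Qed.

Lemma clm_ge0 x : (0 <= clm N A b x)%E.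
Proof. by apply: le_ereal_inf_tmp => _ [k [k0 _] <-]; rewrite lee_fin. Qed.

Lemma clmE x : calm_const N A b x !=set0 ->
  clm N A b x = (inf (calm_const N A b x))%:E.
Proof.
by move=> ne; rewrite /clm ereal_inf_EFin //; apply: calm_const_lbound.
Qed.

End Calmness.

Theorem lemma2 (R : realType) (m n : nat) (N : 'cV[R]_n -> R)
    (A : 'M[R]_(m, n)) (b : 'cV[R]_m) (F : set 'cV[R]_n) :
  is_norm N ->
  feas A b !=set0 ->
  is_face (feas A b) F ->
  exists g : R, 0 <= g /\
    (forall x, ri N F x -> clm N A b x = g%:E) /\
    (forall x, F x -> ~ ri N F x -> (g%:E <= clm N A b x)%E).
Proof.
move=> normN _ [FP _ _].
have [[x0 rx0]|no_ri] := pselect (exists x, ri N F x); last first.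
  exists 0; split=> //; split=> [x rx|x _ _]; last exact: clm_ge0.
  by case: no_ri; exists x.
have [k ck] := calm_const_exists normN (FP _ rx0.1).
exists (inf (calm_const N A b x0)).
split; first by apply: lb_le_inf; [exists k|move=> ? []].
split=> [x rx|y Fy _].
  have same : calm_const N A b x = calm_const N A b x0.
    apply/seteqP; split; [exact (calm_const_ri normN FP rx0 rx.1)|].
    exact (calm_const_ri normN FP rx rx0.1).
  by rewrite clmE same //; exists k.
apply: le_ereal_inf_tmp => _ [k' ck' <-]; rewrite lee_fin.
apply: ge_inf; first exact: calm_const_lbound.
exact (calm_const_ri normN FP rx0 Fy ck').
Qed.
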